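(* For $n\ge1$ let $Q_n$ be the number of domino tilings of $K_{1,3}\times P_{2n}$, and let $T_n$ be the number of domino tilings of $C_3\times P_{2n}$. For $n\ge0$ let $q_n$ be the number of domino tilings of the graph obtained from $K_{1,3}\times P_{2n+1}$ by deleting two leaf-vertices of the end copy $K_{1,3}\times\{1\}$. Let $t_n$ be the number of domino tilings of the graph obtained from $C_3\times P_{2n+1}$ by deleting one vertex of the end copy $C_3\times\{1\}$. Then $Q_n=T_n$ for all $n\ge1$ and $q_n=t_n$ for all $n\ge0$.
   Context: $H\times K$ denotes the Cartesian product of graphs. $P_m$ is the path with vertex set $\{1,\dots,m\}$. $C_3$ is the triangle and $K_{1,3}$ is the star with one center and three leaves. A domino tiling of a finite graph is a perfect matching, and the number of domino tilings is the number of perfect matchings. *)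

From mathcomp Require Import all_boot.
Set Implicit Arguments. Unset Strict Implicit. Unset Printing Implicit Defensive.

(* A finite simple graph is given by a vertex set A : {set V} inside a finType V
   and a symmetric irreflexive edge relation e : rel V (only edges between
   vertices of A count).  Induced subgraphs (vertex deletion) shrink A. *)

Definition is_perfect_matching (V : finType) (A : {set V}) (e : rel V)
    (M : {set {set V}}) : bool :=
  [forall B in M, exists x, exists y,
      [&& B == [set x; y], x != y, e x y, x \in A & y \in A]]
  && [forall x in A, #|[set B in M | x \in B]| == 1].

(* number of domino tilings = number of perfect matchings *)
Definition num_tilings (V : finType) (A : {set V}) (e : rel V) : nat :=
  #|[set M : {set {set V}} | is_perfect_matching A e M]|.

Definition cart_rel (V W : finType) (e1 : rel V) (e2 : rel W) : rel (V * W) :=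
  fun p q => ((p.1 == q.1) && e2 p.2 q.2) || ((p.2 == q.2) && e1 p.1 q.1).

(* Path P_m on 'I_m: index i : 'I_m stands for vertex i+1 of {1,...,m}. *)
Definition path_rel (m : nat) : rel 'I_m :=
  fun i j => (i.+1 == j :> nat) || (j.+1 == i :> nat).

Definition C3_rel : rel 'I_3 := fun x y => x != y.

(* Star K_{1,3} on 'I_4: center 0, leaves 1,2,3 *)
Definition K13_rel : rel 'I_4 := fun x y => (x == 0 :> nat) != (y == 0 :> nat).

Definition Qn (n : nat) : nat :=
  num_tilings [set: 'I_4 * 'I_(2 * n)] (cart_rel K13_rel (@path_rel (2 * n))).

Definition Tn (n : nat) : nat :=
  num_tilings [set: 'I_3 * 'I_(2 * n)] (cart_rel C3_rel (@path_rel (2 * n))).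

Definition qn (n : nat) : nat :=
  num_tilings
    [set p : 'I_4 * 'I_(2 * n + 1) |
       ~~ ((p.2 == 0 :> nat) && ((p.1 == 1 :> nat) || (p.1 == 2 :> nat)))]
    (cart_rel K13_rel (@path_rel (2 * n + 1))).

Definition tn (n : nat) : nat :=
  num_tilings
    [set p : 'I_3 * 'I_(2 * n + 1) |
       ~~ ((p.2 == 0 :> nat) && (p.1 == 0 :> nat))]
    (cart_rel C3_rel (@path_rel (2 * n + 1))).

From mathcomp Require Import all_boot zify.
Set Implicit Arguments. Unset Strict Implicit. Unset Printing Implicit Defensive.

(* Tilings of G x P_m are counted layer by layer.  The vertices of the outermost
   remaining copy of G are removed one at a time, each being matched either
   inside its copy or to its twin in the next copy; so the number of tilings of
   "layers > k complete, layer k restricted to R" is a sum of the same numbers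
   one layer further in, with coefficients depending only on G.  For G = C_3 and
   G = K_{1,3} these elimination rules, restricted to the eight C_3-states and
   their images under an explicit injection phi into the K_{1,3}-states,
   produce the same multisets of successor states (a finite computation), so by
   induction on the layers the counts agree for every state.  Q_n, T_n and
   q_n, t_n are the counts for corresponding end states. *)

Section PerfectMatchings.
Variables (W : finType) (e : rel W).
Implicit Types (A : {set W}) (M : {set {set W}}) (B : {set W}).

Lemma perfect_matching_blockP A M B :
  is_perfect_matching A e M -> B \in M ->
  exists x y, [/\ B = [set x; y], x != y, e x y, x \in A & y \in A].
Proof.
case/andP=> /forall_inP blocks _ /blocks /existsP[x /existsP[y]].
by case/and5P=> /eqP-> *; exists x, y.
Qed.

Lemma perfect_matching_sub A M B :
  is_perfect_matching A e M -> B \in M -> B \subset A.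
Proof.
by move=> pmM /(perfect_matching_blockP pmM)[x [y [-> _ _ xA yA]]]; rewrite subUset !sub1set xA.
Qed.

Lemma perfect_matching_unique A M z B B' :
  is_perfect_matching A e M -> B \in M -> B' \in M -> z \in B -> z \in B' -> B = B'.
Proof.
move=> pmM BM B'M zB zB'.
have zA : z \in A by apply: subsetP (perfect_matching_sub pmM BM) _ zB.
case/andP: pmM => _ /forall_inP/(_ z zA)/cards1P[B0 EB0].
have inB0 C : C \in M -> z \in C -> C = B0.
  by move=> CM zC; apply/set1P; rewrite -EB0 inE CM.
by rewrite (inB0 B BM zB) (inB0 B' B'M zB').
Qed.

Lemma perfect_matching_cover A M z :
  is_perfect_matching A e M -> z \in A -> exists2 B, B \in M & z \in B.
Proof.
case/andP=> _ /forall_inP cover /cover /cards1P[B EB].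
by have := set11 B; rewrite -EB inE => /andP[]; exists B.
Qed.

Lemma perfect_matchingD A M x y :
  is_perfect_matching A e M -> [set x; y] \in M ->
  is_perfect_matching (A :\ x :\ y) e (M :\ [set x; y]).
Proof.
move=> pmM xyM.
have sxyA := perfect_matching_sub pmM xyM.
have other B : B \in M -> B != [set x; y] -> (x \notin B) && (y \notin B).
  move=> BM nB; apply/andP; split; apply: contra nB => zB; apply/eqP;
    by apply: (perfect_matching_unique pmM BM xyM zB); rewrite !inE eqxx ?orbT.
apply/andP; split.
  apply/forall_inP=> B; rewrite !inE => /andP[nB BM].
  have /andP[xB yB] := other B BM nB.
  have inD z : z \in B -> z \in A :\ x :\ y.
    move=> zB; rewrite !inE (subsetP (perfect_matching_sub pmM BM) _ zB) andbT.
    by apply/andP; split; apply/eqP=> zE; [move: yB | move: xB]; rewrite -zE zB.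
  case: (perfect_matching_blockP pmM BM) => a [b [EB nab eab _ _]].
  apply/existsP; exists a; apply/existsP; exists b; rewrite EB eqxx nab eab.
  by rewrite !inD // EB !inE eqxx ?orbT.
apply/forall_inP=> z; rewrite !inE => /and3P[zy zx zA].
case/andP: pmM => _ /forall_inP /(_ _ zA) /eqP <-.
apply/eqP; apply: eq_card => B; rewrite !inE.
by have [->|] //= := eqVneq B [set x; y]; rewrite !inE (negPf zx) (negPf zy) andbF.
Qed.

Lemma perfect_matchingU A M x y :
  is_perfect_matching (A :\ x :\ y) e M -> x \in A -> y \in A -> x != y -> e x y ->
  is_perfect_matching A e ([set x; y] |: M).
Proof.
move=> pmM xA yA nxy exy.
have outside B : B \in M -> (x \notin B) && (y \notin B).
  move=> BM; have /subsetP sBA := perfect_matching_sub pmM BM.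
  by apply/andP; split; apply/negP=> /sBA; rewrite !inE eqxx ?andbF.
apply/andP; split.
  apply/forall_inP=> B; rewrite !inE => /orP[/eqP->|BM].
    by apply/existsP; exists x; apply/existsP; exists y; rewrite eqxx nxy exy xA yA.
  case: (perfect_matching_blockP pmM BM) => a [b [-> nab eab]].
  rewrite !inE => /and3P[_ _ aA] /and3P[_ _ bA].
  by apply/existsP; exists a; apply/existsP; exists b; rewrite eqxx nab eab aA bA.
apply/forall_inP=> z zA.
have [zxy|zNxy] := boolP (z \in [set x; y]).
  rewrite -(cards1 [set x; y]); apply/eqP; apply: eq_card => B; rewrite !inE.
  have [->|_] := eqVneq B [set x; y]; first by rewrite zxy.
  case BM: (B \in M) => //=; apply/negbTE.
  by case/set2P: zxy => ->; case/andP: (outside B BM).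
have zA' : z \in A :\ x :\ y by move: zNxy; rewrite !inE negb_or => /andP[-> ->].
case/andP: pmM => _ /forall_inP /(_ _ zA') /eqP <-.
apply/eqP; apply: eq_card => B; rewrite !inE.
by case: eqP => [->|] //=; rewrite (negPf zNxy) /=; case: (_ \in M).
Qed.

Lemma num_tilings_set0 : num_tilings set0 e = 1.
Proof.
rewrite /num_tilings -(cards1 (set0 : {set {set W}})); apply: eq_card => M.
rewrite !inE; apply/idP/eqP => [/andP[/forall_inP blocks _]|->].
  apply/setP=> B; rewrite inE; apply/negP=> /blocks /existsP[a /existsP[b]].
  by rewrite inE andFb !andbF.
by apply/andP; split; apply/forall_inP=> z; rewrite inE.
Qed.

Lemma card_perfect_matchings_with A x y :
  x \in A -> y \in A -> x != y -> e x y ->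
  #|[set M | is_perfect_matching A e M & [set x; y] \in M]| = num_tilings (A :\ x :\ y) e.
Proof.
move=> xA yA nxy exy.
have xy_out M : is_perfect_matching (A :\ x :\ y) e M -> [set x; y] \notin M.
  move=> pmM; apply/negP=> /(perfect_matching_sub pmM) /subsetP /(_ x (set21 _ _)).
  by rewrite !inE eqxx andbF.
have -> : [set M | is_perfect_matching A e M & [set x; y] \in M] =
          [set [set x; y] |: M | M in [set M | is_perfect_matching (A :\ x :\ y) e M]].
  apply/setP=> M; rewrite !inE; apply/andP/imsetP => [[pmM xyM]|[M' + ->]].
    by exists (M :\ [set x; y]); rewrite ?inE ?perfect_matchingD ?setD1K.
  by rewrite inE => pmM'; rewrite perfect_matchingU // !inE eqxx.
rewrite card_in_imset // => M1 M2; rewrite !inE => /xy_out M1xy /xy_out M2xy E.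
by rewrite -(setU1K M1xy) -(setU1K M2xy) E.
Qed.

Lemma perfect_matching_partner A M x :
  symmetric e -> is_perfect_matching A e M -> x \in A ->
  exists y0, forall y, [&& y \in A, e x y, y != x & [set x; y] \in M] = (y == y0).
Proof.
move=> e_sym pmM xA; case: (perfect_matching_cover pmM xA) => B BM xB.
case: (perfect_matching_blockP pmM BM) => a [b [EB nab eab aA bA]].
have [y0 [EB0 y0A exy0 y0x]] : exists y0, [/\ B = [set x; y0], y0 \in A, e x y0 & y0 != x].
  move: xB; rewrite EB => /set2P[->|->]; first by exists b; rewrite eq_sym.
  by exists a; rewrite setUC e_sym.
exists y0 => y; apply/idP/eqP => [/and4P[_ _ yx xyM]|->]; last by rewrite y0A exy0 y0x -EB0.
have := set22 x y; rewrite (perfect_matching_unique pmM xyM BM (set21 _ _) xB) EB0.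
by case/set2P=> // yE; rewrite yE eqxx in yx.
Qed.

Lemma num_tilings_expand A x :
  symmetric e -> x \in A ->
  num_tilings A e = \sum_(y in A | e x y && (y != x)) num_tilings (A :\ x :\ y) e.
Proof.
move=> e_sym xA.
rewrite (eq_bigr (fun y => \sum_(M | is_perfect_matching A e M && ([set x; y] \in M)) 1));
  last first.
  move=> y /andP[yA /andP[exy yx]].
  rewrite -card_perfect_matchings_with // 1?eq_sym // -sum1_card.
  by apply: eq_bigl => M; rewrite inE.
rewrite (exchange_big_dep (is_perfect_matching A e)) => [|y M _ /andP[] //].
rewrite /num_tilings -sum1_card; apply: eq_big => [M|M]; rewrite ?inE // => pmM.
case: (perfect_matching_partner e_sym pmM xA) => y0 Ey0.
by rewrite (big_pred1 y0) // => y; rewrite /= pmM -Ey0 !andbA andbT.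
Qed.

End PerfectMatchings.

Lemma cart_rel_sym (V W : finType) (e1 : rel V) (e2 : rel W) :
  symmetric e1 -> symmetric e2 -> symmetric (cart_rel e1 e2).
Proof. by move=> e1_sym e2_sym p q; rewrite /cart_rel e1_sym e2_sym (eq_sym p.1) (eq_sym p.2). Qed.

Lemma path_rel_sym m : symmetric (@path_rel m).
Proof. by move=> i j; rewrite /path_rel orbC. Qed.

Lemma num_tilings_cart_expand (V W : finType) (e1 : rel V) (e2 : rel W)
    (A : {set V * W}) x w :
  symmetric e1 -> symmetric e2 -> (x, w) \in A ->
  num_tilings A (cart_rel e1 e2) =
    \sum_(y | [&& (y, w) \in A, e1 x y & y != x])
       num_tilings (A :\ (x, w) :\ (y, w)) (cart_rel e1 e2)
  + \sum_(v | [&& (x, v) \in A, e2 w v & v != w])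
       num_tilings (A :\ (x, w) :\ (x, v)) (cart_rel e1 e2).
Proof.
move=> e1_sym e2_sym xwA.
rewrite (num_tilings_expand (cart_rel_sym e1_sym e2_sym) xwA) (bigID (fun q => q.2 == w)) /=.
congr (_ + _).
  rewrite (reindex_onto (fun y => (y, w)) fst) => [|[y v] /andP[_ /eqP/= ->] //].
  apply: eq_bigl => y; rewrite /cart_rel /= !eqxx !xpair_eqE andbT.
  by case: (eqVneq y x) => [->|]; rewrite ?eqxx ?andbF //= andbT.
rewrite (reindex_onto (fun v => (x, v)) snd) => [|[y v] /andP[/andP[_ /andP[]]]] /=; last first.
  rewrite /cart_rel /= eq_sym => /orP[/andP[/eqP-> _] //|/andP[/eqP-> _]] _.
  by rewrite eqxx.
apply: eq_bigl => v; rewrite /cart_rel /= !eqxx !xpair_eqE /= andbT.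
by case: (eqVneq v w) => [->|]; rewrite ?eqxx ?andbF //= andbT !orbF.
Qed.

(* Unlike [enum 'I_n], this enumeration reduces under [vm_compute]. *)
Fixpoint ords n : seq 'I_n := if n is k.+1 then ord0 :: map (lift ord0) (ords k) else [::].

Lemma ords_enum n : ords n = ord_enum n.
Proof.
apply: (inj_map val_inj); rewrite val_ord_enum.
elim: n => //= n IH; rewrite -map_comp (eq_map (g := S \o val)) => [|i]; last exact: lift0.
by rewrite map_comp IH -(iotaDl 1).
Qed.

Lemma sum_ords n (P : pred 'I_n) (F : 'I_n -> nat) :
  \sum_(i | P i) F i = sumn [seq F i | i <- ords n & P i].
Proof.
rewrite sumnE big_map big_filter ords_enum [RHS]big_mkcond (big_uniq _ (ord_enum_uniq n)).
by rewrite big_mkcond; apply: eq_bigl => i; rewrite mem_ord_enum.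
Qed.

(* Subsets of the vertices of one copy of G are bit masks, since finsets do not
   reduce under [vm_compute]. *)
Definition clr (b : seq bool) (x : nat) : seq bool := set_nth false b x false.

Lemma nth_clr b x y : nth false (clr b x) y = (y != x) && nth false b y.
Proof. by rewrite /clr nth_set_nth /=; case: eqP. Qed.

Section Elimination.
Variables (n : nat) (e : rel 'I_n).

Definition mask_set (b : seq bool) : {set 'I_n} := [set y : 'I_n | nth false b y].

(* [R] is the outermost remaining copy and [S] the next one; the vertex [x] of [R]
   is matched inside [R] or to its twin in [S]. *)
Definition elim_step (S R : seq bool) (x : 'I_n) : seq (seq bool * seq bool) :=
  [seq (S, clr (clr R x) y) | y : 'I_n <- ords n & [&& nth false R y, e x y & y != x]]
  ++ (if nth false S x then [:: (clr S x, clr R x)] else [::]).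

Fixpoint eliminate (fuel : nat) (S R : seq bool) : seq (seq bool * seq bool) :=
  if fuel is k.+1 then
    if ohead [seq y : 'I_n <- ords n | nth false R y] is Some x then
      flatten [seq eliminate k p.1 p.2 | p <- elim_step S R x]
    else [:: (S, R)]
  else [:: (S, R)].

Lemma elim_step_sub S R x q : q \in elim_step S R x ->
  mask_set q.2 \subset mask_set R :\ x.
Proof.
rewrite mem_cat => /orP[/mapP[y _ ->]|].
  by apply/subsetP=> z; rewrite /mask_set !inE !nth_clr => /andP[].
case: ifP => _; rewrite ?inE // => /eqP->.
by apply/subsetP=> z; rewrite /mask_set !inE !nth_clr.
Qed.

Lemma elim_step_lower S R x q y :
  q \in elim_step S R x -> nth false q.1 y -> nth false S y.
Proof.
rewrite mem_cat => /orP[/mapP[z _ ->] //|].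
by case: ifP => _; rewrite ?inE // => /eqP->; rewrite nth_clr => /andP[].
Qed.

Lemma eliminate_first R x :
  ohead [seq y : 'I_n <- ords n | nth false R y] = Some x -> nth false R x.
Proof.
move=> Ex; have : x \in [seq y : 'I_n <- ords n | nth false R y].
  by move: Ex; case: [seq _ <- _ | _] => //= y s [<-]; rewrite mem_head.
by rewrite mem_filter => /andP[].
Qed.

Lemma eliminate_none R (y : 'I_n) :
  ohead [seq y : 'I_n <- ords n | nth false R y] = None -> ~~ nth false R y.
Proof.
have : (y \in [seq y : 'I_n <- ords n | nth false R y]) = nth false R y.
  by rewrite mem_filter ords_enum mem_ord_enum andbT.
by case: [seq _ <- _ | _] => //= <-.
Qed.

Lemma eliminate_exhausts_fuel fuel S R p :
  #|mask_set R| <= fuel -> p \in eliminate fuel S R ->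
  forall y : 'I_n, ~~ nth false p.2 y.
Proof.
elim: fuel S R => [|k IH] S R /=.
  rewrite leqn0 => /eqP/cards0_eq/setP R0; rewrite inE => /eqP-> y.
  by have := R0 y; rewrite /mask_set !inE => ->.
case Ex: (ohead _) => [x|] hR; last by rewrite inE => /eqP-> y; apply: eliminate_none Ex.
case/flatten_mapP=> q /elim_step_sub /subset_leq_card sq; apply: IH.
have xR : x \in mask_set R by rewrite /mask_set inE (eliminate_first Ex).
have := cardsD1 x (mask_set R); rewrite xR add1n => Ecard.
by apply: leq_trans sq _; rewrite -ltnS -Ecard.
Qed.

Lemma eliminate_exhausts S R p :
  p \in eliminate n S R -> forall y : 'I_n, ~~ nth false p.2 y.
Proof. by apply: eliminate_exhausts_fuel; rewrite -[n in _ <= n]card_ord max_card. Qed.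

End Elimination.

Section Stack.
Variables (n m : nat) (e : rel 'I_n).
Hypothesis e_sym : symmetric e.

(* [stack k S R]: G x P_m with the copies [i < k] deleted, copy [k] restricted
   to [R], copy [k.+1] to [S] and the copies beyond complete. *)
Definition layer (k : nat) (S R : seq bool) (i : nat) : seq bool :=
  if k.+1 < i then nseq n true else if i == k.+1 then S else if i == k then R else [::].

Definition stack (k : nat) (S R : seq bool) : {set 'I_n * 'I_m} :=
  [set p : 'I_n * 'I_m | nth false (layer k S R p.2) p.1].

Local Notation N A := (num_tilings A (cart_rel e (@path_rel m))).

Lemma stack_clr_top k S R x (i : 'I_m) :
  i = k :> nat -> stack k S R :\ (x, i) = stack k S (clr R x).
Proof.
move=> ik; apply/setP=> -[y j]; rewrite !inE /layer /= xpair_eqE.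
have -> : (j == i) = (j == k :> nat) by rewrite -ik.
have [->|_] := eqVneq (val j) k; last by rewrite andbF.
by rewrite ltnNge leqnSn (ltn_eqF (ltnSn k)) nth_clr andbT.
Qed.

Lemma stack_clr_below k S R x (i : 'I_m) :
  i = k.+1 :> nat -> stack k S R :\ (x, i) = stack k (clr S x) R.
Proof.
move=> ik; apply/setP=> -[y j]; rewrite !inE /layer /= xpair_eqE.
have -> : (j == i) = (j == k.+1 :> nat) by rewrite -ik.
have [->|_] := eqVneq (val j) k.+1; last by rewrite andbF.
by rewrite ltnn ?eqxx nth_clr andbT.
Qed.

Lemma stack_below_neighbour k S R x (i v : 'I_m) : i = k :> nat ->
  [&& (x, v) \in stack k S R, path_rel i v & v != i] = nth false S x && (v == k.+1 :> nat).
Proof.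
move=> ik; have -> : (v != i) = (val v != k) by rewrite -ik.
rewrite inE /layer /path_rel /= ik.
have [-> | vk1] := eqVneq (val v) k.+1.
  by rewrite ltnn (gtn_eqF (ltnSn k)) !andbT.
rewrite andbF /=.
have [vk|] := eqVneq v.+1 k; last by rewrite andbF.
by rewrite -vk ifF 1?ifF ?nth_nil // ?(ltn_eqF (ltnSn v)) // ltnNge (leqW (leqnSn v)).
Qed.

Lemma num_tilings_elim_step k S R (x : 'I_n) :
  k < m -> nth false R x -> (m <= k.+1 -> ~~ nth false S x) ->
  N (stack k S R) = sumn [seq N (stack k p.1 p.2) | p <- elim_step e S R x].
Proof.
move=> km Rx Sx; pose i := Ordinal km.
have xi : (x, i) \in stack k S R.
  by rewrite inE /layer /= ltnNge leqnSn (ltn_eqF (ltnSn k)) eqxx.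
rewrite (num_tilings_cart_expand e_sym (@path_rel_sym m) xi) /elim_step map_cat sumn_cat.
congr (_ + _).
  rewrite -map_comp -sum_ords.
  apply: eq_big => [y|y _]; last by rewrite !stack_clr_top.
  by rewrite inE /layer /= ltnNge leqnSn (ltn_eqF (ltnSn k)) eqxx.
rewrite (eq_big (fun v : 'I_m => nth false S x && (v == k.+1 :> nat))
                (fun=> N (stack k (clr S x) (clr R x)))) => [|v|v].
- rewrite (big_ord1_cond_eq _ (fun=> N (stack k (clr S x) (clr R x))) (fun=> nth false S x)).
  case: ifP => [/andP[_ ->] /=|]; first by rewrite addn0.
  by case: ltnP => [_ /= ->|/Sx/negPf->].
- exact: stack_below_neighbour.
- by rewrite stack_below_neighbour // => /andP[_ /eqP vk]; rewrite stack_clr_top // stack_clr_below.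
Qed.

Lemma num_tilings_eliminate fuel k S R :
  k < m -> (m <= k.+1 -> forall y : 'I_n, ~~ nth false S y) ->
  N (stack k S R) = sumn [seq N (stack k p.1 p.2) | p <- eliminate e fuel S R].
Proof.
elim: fuel S R => [|f IH] S R km S0 /=; first by rewrite addn0.
case Ex: (ohead _) => [x|] /=; last by rewrite addn0.
rewrite (num_tilings_elim_step km (eliminate_first Ex)) => [|/S0 //].
rewrite map_flatten sumn_flatten -!map_comp; congr sumn; apply/eq_in_map => q qS /=.
apply: IH => // /S0 Sy y; apply: contra (Sy y); exact: elim_step_lower qS.
Qed.

Lemma stack_shift k S T :
  (forall y : 'I_n, ~~ nth false T y) -> stack k S T = stack k.+1 (nseq n (k.+2 < m)) S.
Proof.
move=> T0; apply/setP=> -[y j]; rewrite !inE /layer /=.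
have := ltn_ord j; move: (val j) => i im.
by do !case: ifP => ?; rewrite ?nth_nil ?nth_nseq ?ltn_ord ?(negPf (T0 y)) //; lia.
Qed.

Lemma stack_last k S T :
  m <= k.+1 -> (forall y : 'I_n, ~~ nth false T y) -> stack k S T = set0.
Proof.
move=> mk T0; apply/setP=> -[y j]; rewrite !inE /layer /=.
have := ltn_ord j; move: (val j) => i im.
by do !case: ifP => ?; rewrite ?nth_nil ?(negPf (T0 y)) //; lia.
Qed.

(* The mask of the next copy is complete, or empty when [k] is the last copy, so
   that [elim_step] never matches into a copy that does not exist. *)
Definition stack_tilings k R := N (stack k (nseq n (k.+1 < m)) R).

Lemma stack_tilings_last k R :
  m = k.+1 -> stack_tilings k R = size (eliminate e n (nseq n false) R).
Proof.
move=> mk; have km : k < m by rewrite mk.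
rewrite /stack_tilings; have -> : (k.+1 < m) = false by rewrite mk ltnn.
rewrite (num_tilings_eliminate n R km) => [|_ y]; last by rewrite nth_nseq if_same.
rewrite sumnE big_map -sum1_size; apply: eq_big_seq => p /eliminate_exhausts p0.
by rewrite stack_last ?mk // num_tilings_set0.
Qed.

Lemma stack_tilings_step k R : k.+1 < m ->
  stack_tilings k R = sumn [seq stack_tilings k.+1 p.1 | p <- eliminate e n (nseq n true) R].
Proof.
move=> km; rewrite /stack_tilings km (num_tilings_eliminate n R (ltnW km)) => [|/(leq_trans km)];
  last by rewrite ltnn.
by congr sumn; apply/eq_in_map => p /eliminate_exhausts p0; rewrite stack_shift.
Qed.

Lemma stack0E R :
  stack 0 (nseq n (1 < m)) R = [set p : 'I_n * 'I_m | (p.2 != 0 :> nat) || nth false R p.1].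
Proof.
by apply/setP=> -[y [[|[|i]] im]]; rewrite !inE /layer /= ?nth_nseq ?ltn_ord ?im.
Qed.

End Stack.

Lemma K13_rel_sym : symmetric K13_rel.
Proof. by move=> x y; rewrite /K13_rel eq_sym. Qed.

Lemma C3_rel_sym : symmetric C3_rel.
Proof. by move=> x y; rewrite /C3_rel eq_sym. Qed.

Definition phi (c : seq bool) : seq bool :=
  match c with
  | [:: false; false; false] => [:: false; false; false; false]
  | [:: true; false; false] => [:: false; true; true; false]
  | [:: false; true; false] => [:: false; true; false; true]
  | [:: false; false; true] => [:: false; false; true; true]
  | [:: true; true; false] => [:: true; true; false; false]
  | [:: true; false; true] => [:: true; false; true; false]
  | [:: false; true; true] => [:: true; false; false; true]
  | _ => [:: true; true; true; true]
  end.

Definition masks3 : seq (seq bool) :=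
  [:: [:: false; false; false]; [:: true; false; false]; [:: false; true; false];
      [:: false; false; true]; [:: true; true; false]; [:: true; false; true];
      [:: false; true; true]; [:: true; true; true]].

Definition transfer_check (b : bool) : bool :=
  all (fun c => perm_eq [seq p.1 | p <- eliminate K13_rel 4 (nseq 4 b) (phi c)]
                        [seq phi p.1 | p <- eliminate C3_rel 3 (nseq 3 b) c]
                && all (fun p => p.1 \in masks3) (eliminate C3_rel 3 (nseq 3 b) c))
      masks3.

Lemma transfer_check_holds b : transfer_check b.
Proof. by case: b; vm_compute. Qed.

Lemma stack_tilings_phi m k c : k < m -> c \in masks3 ->
  stack_tilings m K13_rel k (phi c) = stack_tilings m C3_rel k c.
Proof.
move=> km; move Ed: (m - k.+1) => d; elim: d k km Ed c => [|d IH] k km Ed c c3.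
  have mk : m = k.+1 by lia.
  have /allP/(_ c c3)/andP[/perm_size + _] := transfer_check_holds false.
  by rewrite (stack_tilings_last K13_rel_sym) // (stack_tilings_last C3_rel_sym) // !size_map.
have km1 : k.+1 < m by lia.
have /allP/(_ c c3)/andP[pe /allP sub] := transfer_check_holds true.
rewrite (stack_tilings_step K13_rel_sym) // (stack_tilings_step C3_rel_sym) //.
rewrite (map_comp (stack_tilings m K13_rel k.+1) fst) (perm_sumn (perm_map _ pe)) -!map_comp.
by congr sumn; apply/eq_in_map => p /sub pc; apply: IH => //; lia.
Qed.

Lemma num_tilings_phi m c : 0 < m -> c \in masks3 ->
  num_tilings [set p : 'I_4 * 'I_m | (p.2 != 0 :> nat) || nth false (phi c) p.1]
    (cart_rel K13_rel (@path_rel m)) =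
  num_tilings [set p : 'I_3 * 'I_m | (p.2 != 0 :> nat) || nth false c p.1]
    (cart_rel C3_rel (@path_rel m)).
Proof. by move=> m0 c3; rewrite -!stack0E; exact: stack_tilings_phi. Qed.

Theorem theorem9 :
  (forall n : nat, 1 <= n -> Qn n = Tn n) /\ (forall n : nat, qn n = tn n).
Proof.
split=> [n n1|n].
  have gridK : [set: 'I_4 * 'I_(2 * n)] =
      [set p : 'I_4 * 'I_(2 * n) | (p.2 != 0 :> nat) || nth false (phi (nseq 3 true)) p.1].
    by apply/setP=> -[[[|[|[|[|i]]]] Hi] j]; rewrite !inE //= orbT.
  have gridC : [set: 'I_3 * 'I_(2 * n)] =
      [set p : 'I_3 * 'I_(2 * n) | (p.2 != 0 :> nat) || nth false (nseq 3 true) p.1].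
    by apply/setP=> -[y j]; rewrite !inE nth_nseq ltn_ord orbT.
  by rewrite /Qn /Tn gridK gridC num_tilings_phi //; lia.
have endK : [set p : 'I_4 * 'I_(2 * n + 1) |
               ~~ ((p.2 == 0 :> nat) && ((p.1 == 1 :> nat) || (p.1 == 2 :> nat)))] =
    [set p : 'I_4 * 'I_(2 * n + 1) |
       (p.2 != 0 :> nat) || nth false (phi [:: false; true; true]) p.1].
  by apply/setP=> -[[[|[|[|[|i]]]] Hi] j]; rewrite !inE //=; case: (j == 0 :> nat).
have endC : [set p : 'I_3 * 'I_(2 * n + 1) | ~~ ((p.2 == 0 :> nat) && (p.1 == 0 :> nat))] =
    [set p : 'I_3 * 'I_(2 * n + 1) | (p.2 != 0 :> nat) || nth false [:: false; true; true] p.1].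
  by apply/setP=> -[[[|[|[|i]]] Hi] j]; rewrite !inE //=; case: (j == 0 :> nat).
by rewrite /qn /tn endK endC num_tilings_phi //; lia.
Qed.
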